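(* Let $n \ge 3$. Then \[\det'(Q_n) = \begin{cases} \lceil \log_2 n \rceil + 1, & \text{if } n - \lceil \log_2 n \rceil > 2^{\lceil \log_2 n \rceil - 1},\\ \lceil \log_2 n \rceil, & \text{otherwise.}\end{cases}\]
   Context: $Q_n$ is the $n$-dimensional hypercube: its vertices are the binary strings of length $n$, two being adjacent iff they differ in exactly one bit. For a graph $G$ with at most one isolated vertex and no component isomorphic to $K_2$, an edge subset $T$ is an edge determining set if the only automorphism $\phi$ of $G$ satisfying $\{\phi(u),\phi(v)\}=\{u,v\}$ for all $\{u,v\}\in T$ is the identity; the determining index $\det'(G)$ is the minimum size of an edge determining set. *)

From mathcomp Require Import all_boot all_fingroup.
Set Implicit Arguments. Unset Strict Implicit. Unset Printing Implicit Defensive.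

Definition hvert (n : nat) : finType := {ffun 'I_n -> bool}.

Definition hadj (n : nat) (u v : hvert n) : bool := #|[set i | u i != v i]| == 1.

Definition hedges (n : nat) : {set {set hvert n}} :=
  [set [set p.1; p.2] | p in [set p : hvert n * hvert n | hadj p.1 p.2]].

Definition hauto (n : nat) (phi : {perm hvert n}) : Prop :=
  forall u v : hvert n, hadj (phi u) (phi v) = hadj u v.

Definition edge_determining (n : nat) (T : {set {set hvert n}}) : Prop :=
  T \subset hedges n /\
  forall phi : {perm hvert n}, hauto phi ->
    (forall e, e \in T -> phi @: e = e) -> phi = 1%g.

Definition det_index (n : nat) (k : nat) : Prop :=
  (exists T : {set {set hvert n}}, edge_determining T /\ #|T| = k) /\
  (forall T : {set {set hvert n}}, edge_determining T -> k <= #|T|).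

From mathcomp Require Import all_boot all_fingroup zify.

Set Implicit Arguments. Unset Strict Implicit. Unset Printing Implicit Defensive.

(* Every automorphism of Q_n is affine, x |-> x o s + a, as one sees by
   induction on the weight of x: a vertex of weight >= 2 is pinned down as a
   common neighbour of two lighter vertices.

   Lower bound: if T is determining, its edges use at least two directions
   (otherwise translation along the single direction fixes T), so |T| >= 2;
   every other coordinate c is constant on each edge of T, and relative to a
   fixed edge e0 it yields a "signature", the set of edges whose value at c
   differs from that of e0.  Two coordinates with the same signature can be
   swapped (composed with a translation) without moving any edge of T, so the
   at least n - |T| remaining coordinates have distinct signatures in the
   power set of T minus e0: n - |T| <= 2^(|T|-1).

   Upper bound: for 2 <= k <= n with n - k <= 2^(k-1), take the edges of
   directions 0, ..., k-1 based at vertices whose coordinate c >= k encodes,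
   across the edges 1, ..., k-1, the binary expansion of c - k.  An affine
   map fixing them must fix coordinates < k, then all higher coordinates, as
   their binary codes are distinct.  The bound for n - k singles out
   ceil(log2 n) or ceil(log2 n) + 1 as the least admissible k. *)

Section Hypercube.
Variable n : nat.
Local Notation V := (hvert n).

Definition hzero : V := [ffun => false].
Definition flip (i : 'I_n) (x : V) : V := [ffun c => x c (+) (c == i)].

Lemma flipK i : involutive (flip i).
Proof. by move=> x; apply/ffunP => c; rewrite !ffunE addbK. Qed.

Lemma flip_neq i x : flip i x != x.
Proof. by apply/eqP => /ffunP /(_ i); rewrite ffunE eqxx; case: (x i). Qed.

Lemma hadj_flip u i : hadj u (flip i u).
Proof.
apply/cards1P; exists i; apply/setP => c.
by rewrite !inE ffunE; case: (u c); case: (c == i).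
Qed.

Lemma hadjP u v : reflect (exists i, v = flip i u) (hadj u v).
Proof.
apply: (iffP idP) => [/cards1P [i Hi]|[i ->]]; last exact: hadj_flip.
exists i; apply/ffunP => c; move/setP: Hi => /(_ c).
by rewrite !inE ffunE; case: (c == i); case: (u c); case: (v c).
Qed.

Definition dirs (e : {set V}) : {set 'I_n} :=
  [set c | [exists p in e, exists q in e, p c != q c]].

Lemma dirs_edge u i : dirs [set u; flip i u] = [set i].
Proof.
apply/setP => c; rewrite !inE; apply/existsP/idP.
- move=> [p /andP[]]; rewrite !inE => /orP[]/eqP-> /existsP[q /andP[]];
    rewrite !inE => /orP[]/eqP->; rewrite ?ffunE;
  by case: (u c); case: (c == i).
- move=> ci; exists u; rewrite !inE eqxx; apply/existsP; exists (flip i u).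
  by rewrite !inE eqxx orbT ffunE ci addbT; case: (u c).
Qed.

Lemma hedgesP e : e \in hedges n -> exists u i, e = [set u; flip i u].
Proof.
by move=> /imsetP [[u v]]; rewrite inE /= => /hadjP [i ->] ->; exists u, i.
Qed.

Lemma edge_in_hedges u i : [set u; flip i u] \in hedges n.
Proof. by apply/imsetP; exists (u, flip i u); rewrite // inE /= hadj_flip. Qed.

Lemma hauto_mul (phi psi : {perm V}) :
  hauto phi -> hauto psi -> hauto (phi * psi).
Proof. by move=> Hphi Hpsi u v; rewrite !permM Hpsi Hphi. Qed.

Lemma hauto_inv (phi : {perm V}) : hauto phi -> hauto phi^-1.
Proof. by move=> Hphi u v; rewrite -Hphi !permKV. Qed.

Definition haff (s : {perm 'I_n}) (a x : V) : V := [ffun c => x (s c) (+) a c].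

Lemma haff_inj s a : injective (haff s a).
Proof.
move=> x y /ffunP Exy; apply/ffunP => c.
by have := Exy (s^-1 c)%g; rewrite !ffunE permKV => /addIb.
Qed.

Definition haffp s a : {perm V} := perm (@haff_inj s a).

Lemma haffpE s a x : haffp s a x = haff s a x.
Proof. by rewrite permE. Qed.

Lemma haffp_auto s a : hauto (haffp s a).
Proof.
move=> u v; rewrite !haffpE /hadj.
have -> : [set c | haff s a u c != haff s a v c] = s @^-1: [set c | u c != v c].
  apply/setP => c; rewrite !inE !ffunE.
  by case: (a c); case: (u (s c)); case: (v (s c)).
by rewrite card_preimset //; exact: perm_inj.
Qed.

Lemma haff_zero s a : haff s a hzero = a.
Proof. by apply/ffunP => c; rewrite !ffunE. Qed.

Lemma haff_flip s a i x : haff s a (flip i x) = flip (s^-1 i)%g (haff s a x).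
Proof.
apply/ffunP => c; rewrite !ffunE (can2_eq (permK s) (permKV s)).
by case: (x (s c)) (a c) (c == s^-1 i)%g => [] [] [].
Qed.

End Hypercube.

Section Automorphisms.
Variable n : nat.
Local Notation V := (hvert n).

Lemma common_neighbour (p x : V) i j : i != j ->
  hadj p (flip i x) -> hadj p (flip j x) -> p = x \/ p = flip i (flip j x).
Proof.
move=> ij /hadjP [r Er] /hadjP [s Es].
have Epr : p = flip r (flip i x) by rewrite Er flipK.
have Eps : p = flip s (flip j x) by rewrite Es flipK.
have flipE c : (c == r) (+) (c == i) = (c == s) (+) (c == j).
  have /ffunP/(_ c) : flip r (flip i x) = flip s (flip j x) by rewrite -Epr -Eps.
  rewrite !ffunE.
  by case: (x c) (c == r) (c == i) (c == s) (c == j) => [] [] [] [] [].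
have [ri|ri] := eqVneq r i; first by left; rewrite Epr ri flipK.
right; have := flipE i.
rewrite eqxx (negbTE ij) eq_sym (negbTE ri) addbF => /esym/eqP si.
have := flipE r; rewrite eqxx -si (negbTE ri) => /esym/eqP rj.
rewrite Epr rj; apply/ffunP => c; rewrite !ffunE.
by case: (x c) (c == i) (c == j) => [] [] [].
Qed.

Definition weight (x : V) := #|[set c | x c]|.

Lemma weight_flip i (x : V) : x i -> weight (flip i x) < weight x.
Proof.
move=> xi; rewrite /weight (cardsD1 i [set c | x c]) inE xi add1n ltnS.
apply: subset_leq_card; apply/subsetP => c; rewrite !inE ffunE.
by case: (eqVneq c i) => [->|ci]; rewrite ?xi ?addbF ?addbT.
Qed.

Lemma weight_le1 (x : V) :
  weight x <= 1 -> x = hzero n \/ exists i, x = flip i (hzero n).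
Proof.
rewrite leq_eqVlt ltnS leqn0 => /orP [/cards1P [i Ei] | /eqP/cards0_eq E0].
  right; exists i; apply/ffunP => c; rewrite !ffunE.
  by move/setP: Ei => /(_ c); rewrite !inE.
left; apply/ffunP => c; rewrite ffunE.
by move/setP: E0 => /(_ c); rewrite !inE; case: (x c).
Qed.

Lemma hauto_fix_units_eq1 (psi : {perm V}) : hauto psi ->
  psi (hzero n) = hzero n -> (forall i, psi (flip i (hzero n)) = flip i (hzero n)) ->
  psi = 1%g.
Proof.
move=> Hpsi fix0 fix1; apply/permP => x; rewrite perm1.
have [m] := ubnP (weight x); elim: m x => // m IH x wx.
have [w1|/card_gt1P [i [j [xi xj ij]]]] := leqP (weight x) 1.
  by case: (weight_le1 w1) => [->|[i ->]].
rewrite !inE in xi xj.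
have xji : flip j x i by rewrite ffunE (negbTE ij) addbF.
have fixi : psi (flip i x) = flip i x by apply: IH; have := weight_flip xi; lia.
have fixj : psi (flip j x) = flip j x by apply: IH; have := weight_flip xj; lia.
have fixij : psi (flip i (flip j x)) = flip i (flip j x).
  by apply: IH; have := weight_flip xji; have := weight_flip xj; lia.
have adji : hadj (psi x) (flip i x) by rewrite -fixi Hpsi hadj_flip.
have adjj : hadj (psi x) (flip j x) by rewrite -fixj Hpsi hadj_flip.
have [//|Eij] := common_neighbour ij adji adjj.
have /perm_inj : psi x = psi (flip i (flip j x)) by rewrite fixij.
by move/ffunP/(_ i); rewrite !ffunE eqxx (negbTE ij) /=; case: (x i).
Qed.

Section AffineRepresentation.
Variable phi : {perm V}.
Hypothesis Hphi : hauto phi.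

Definition hauto_dir (i : 'I_n) : 'I_n :=
  odflt i [pick c | phi (flip i (hzero n)) c != phi (hzero n) c].

Lemma hauto_dirE i : phi (flip i (hzero n)) = flip (hauto_dir i) (phi (hzero n)).
Proof.
have /hadjP [r Er] : hadj (phi (hzero n)) (phi (flip i (hzero n))).
  by rewrite Hphi hadj_flip.
rewrite Er; congr flip; rewrite /hauto_dir; case: pickP => [c|/(_ r)] /=.
  by rewrite Er ffunE; case: (phi (hzero n) c); case: (eqVneq c r).
by rewrite Er ffunE eqxx; case: (phi (hzero n) r).
Qed.

Lemma hauto_dir_inj : injective hauto_dir.
Proof.
move=> i j Eij.
have : flip i (hzero n) = flip j (hzero n).
  by apply: (@perm_inj _ phi); rewrite !hauto_dirE Eij.
by move/ffunP/(_ i); rewrite !ffunE eqxx /= => /esym/eqP.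
Qed.

End AffineRepresentation.

Theorem hauto_affine (phi : {perm V}) : hauto phi -> exists s a, phi = haffp s a.
Proof.
move=> Hphi; pose s := ((perm (hauto_dir_inj Hphi))^-1)%g; pose a := phi (hzero n).
exists s, a; pose psi := (phi * (haffp s a)^-1)%g.
have Hpsi : hauto psi by apply: hauto_mul (hauto_inv (haffp_auto s a)).
have psi_fix x : phi x = haffp s a x -> psi x = x by move=> Ex; rewrite permM Ex permK.
suff /eqP : psi = 1%g by rewrite -eq_mulgV1 => /eqP.
apply: hauto_fix_units_eq1 => [//| |i]; apply: psi_fix; rewrite haffpE.
  by rewrite haff_zero.
by rewrite haff_flip haff_zero invgK permE hauto_dirE.
Qed.

Lemma haffp_fix_edge (s : {perm 'I_n}) (a u : V) j :
  haffp s a @: [set u; flip j u] = [set u; flip j u] ->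
  s j = j /\ forall c, c != j -> u (s c) (+) a c = u c.
Proof.
rewrite imsetU1 imset_set1 !haffpE haff_flip => Ee.
split.
  have := dirs_edge (haff s a u) (s^-1 j)%g; rewrite Ee dirs_edge => /set1_inj sj.
  by rewrite {1}sj permKV.
move=> c cj; have : haff s a u \in [set u; flip j u] by rewrite -Ee !inE eqxx.
by rewrite !inE => /orP [] /eqP /ffunP /(_ c); rewrite !ffunE ?(negbTE cj) ?addbF.
Qed.

End Automorphisms.

Section LowerBound.
Variable n : nat.
Local Notation V := (hvert n).

Definition edge_dirs (T : {set {set V}}) := \bigcup_(e in T) dirs e.

Lemma card_edge_dirs (T : {set {set V}}) :
  T \subset hedges n -> #|edge_dirs T| <= #|T|.
Proof.
move=> Tsub; rewrite /edge_dirs -[#|T|]sum1_card.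
elim/big_ind2: _ => [|a A b B lea leb|e eT]; first by rewrite cards0.
  exact: leq_trans (leq_card_setU A B).1 (leq_add lea leb).
by have [u [i ->]] := hedgesP (subsetP Tsub e eT); rewrite dirs_edge cards1.
Qed.

Lemma haff1_flip i x : haff 1 (flip i (hzero n)) x = flip i x.
Proof. by apply/ffunP => c; rewrite !ffunE perm1 /=; case: (x c). Qed.

Lemma edge_determining_dirs (T : {set {set V}}) :
  0 < n -> edge_determining T -> 1 < #|edge_dirs T|.
Proof.
move=> n_gt0 [Tsub Tdet]; rewrite ltnNge; apply/negP => dirs_le1.
have [i dirsT] : exists i, edge_dirs T \subset [set i].
  case: (set_0Vmem (edge_dirs T)) => [->|[i iT]].
    by exists (Ordinal n_gt0); rewrite sub0set.
  exists i; apply/subsetP => j jT; rewrite inE.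
  by apply/eqP; apply: (card_le1_eqP dirs_le1).
have : haffp 1 (flip i (hzero n)) = 1%g.
  apply: Tdet => [|e eT]; first exact: haffp_auto.
  have [u [r Ee]] := hedgesP (subsetP Tsub e eT).
  have : r \in edge_dirs T by apply/bigcupP; exists e; rewrite // Ee dirs_edge set11.
  move=> /(subsetP dirsT); rewrite inE => /eqP ri.
  by rewrite Ee imsetU1 imset_set1 !haffpE !haff1_flip ri flipK setUC.
move=> /permP /(_ (hzero n)) /eqP.
by rewrite haffpE haff_zero perm1 (negbTE (flip_neq _ _)).
Qed.

Definition ebit (e : {set V}) c := [exists w in e, w c].

Lemma ebitE (e : {set V}) c w : c \notin dirs e -> w \in e -> ebit e c = w c.
Proof.
move=> cNe we; apply/existsP/idP => [[w' /andP [w'e w'c]]|wc].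
  apply/negPn/negP => wNc; case/negP: cNe; rewrite inE; apply/existsP.
  by exists w; rewrite we; apply/existsP; exists w'; rewrite w'e w'c (negbTE wNc).
by exists w; rewrite we.
Qed.

Definition swap (c c' : 'I_n) (b : bool) : {perm V} :=
  haffp (tperm c c') [ffun d => ((d == c) || (d == c')) && b].

Lemma swap_fixE c c' b (x : V) :
  c != c' -> (swap c c' b x == x) = (x c (+) x c' == b).
Proof.
move=> cc'; rewrite haffpE; apply/eqP/eqP => [/ffunP /(_ c)|xb].
  by rewrite !ffunE tpermL eqxx /= => <-; case: (x c') b => [] [].
apply/ffunP => d; rewrite !ffunE; case: (tpermP c c' d) => [->|->|/eqP dc /eqP dc'].
- by rewrite eqxx /= -xb; case: (x c) (x c') => [] [].
- by rewrite eqxx orbT /= -xb; case: (x c) (x c') => [] [].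
- by rewrite (negbTE dc) (negbTE dc') addbF.
Qed.

Lemma notin_edge_dirs (T : {set {set V}}) e c :
  c \notin edge_dirs T -> e \in T -> c \notin dirs e.
Proof. by move=> cNT eT; apply: contra cNT => ce; apply/bigcupP; exists e. Qed.

Definition signature (T : {set {set V}}) e0 c :=
  [set e in T :\ e0 | ebit e c != ebit e0 c].

Lemma signature_inj (T : {set {set V}}) e0 :
  edge_determining T -> {in ~: edge_dirs T &, injective (signature T e0)}.
Proof.
move=> [_ Tdet] c c'; rewrite !inE => cNT c'NT Ecc'; case: (eqVneq c c') => // cc'.
pose b := ebit e0 c (+) ebit e0 c'.
have ebitT e : e \in T -> ebit e c (+) ebit e c' = b.
  move=> eT; have [->//|ee0] := eqVneq e e0.
  have /setP/(_ e) := Ecc'; rewrite !inE ee0 eT /= /b.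
  by case: (ebit e c) (ebit e c') (ebit e0 c) (ebit e0 c') => [] [] [] [].
have swap1 : swap c c' b = 1%g.
  apply: Tdet => [|e eT]; first exact: haffp_auto.
  rewrite -[RHS]imset_id; apply: eq_in_imset => w we; apply/eqP.
  rewrite swap_fixE // -(ebitT e eT).
  by rewrite (ebitE (notin_edge_dirs cNT eT) we) (ebitE (notin_edge_dirs c'NT eT) we).
pose x : V := [ffun d => (d == c) && ~~ b].
have := swap_fixE b x cc'.
rewrite swap1 perm1 eqxx !ffunE eqxx (eq_sym c' c) (negbTE cc').
by case: (b).
Qed.

Lemma edge_determining_lower (T : {set {set V}}) : 0 < n -> edge_determining T ->
  2 <= #|T| /\ n - #|T| <= 2 ^ #|T|.-1.
Proof.
move=> n_gt0 Tdet; have dirsT := card_edge_dirs Tdet.1.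
have dirs_gt1 := edge_determining_dirs n_gt0 Tdet.
split; first lia.
have /card_gt0P [e0 e0T] : 0 < #|T| by lia.
have : #|~: edge_dirs T| <= 2 ^ #|T|.-1.
  rewrite -(card_in_imset (signature_inj (e0 := e0) Tdet)).
  rewrite (cardsD1 e0 T) e0T -card_powerset.
  apply: subset_leq_card; apply/subsetP => _ /imsetP [c _ ->].
  by rewrite powersetE; apply/subsetP => e; rewrite inE => /andP [].
rewrite cardsCs setCK card_ord; lia.
Qed.

End LowerBound.

Fixpoint bit (i m : nat) : bool := if i is i'.+1 then bit i' m./2 else odd m.

Lemma bit_inj b m m' : m < 2 ^ b -> m' < 2 ^ b ->
  (forall i, i < b -> bit i m = bit i m') -> m = m'.
Proof.
elim: b m m' => [|b IH] m m'; first by rewrite expn0; case: m; case: m'.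
rewrite expnS mul2n -!ltn_half_double => hm hm' Ebit.
have Ehalf : m./2 = m'./2 by apply: IH => // i ib; exact: (Ebit i.+1).
by rewrite -(odd_double_half m) -(odd_double_half m') Ehalf; have /= -> := Ebit 0 isT.
Qed.

Section UpperBound.
Variables n k : nat.
Hypotheses (k_ge2 : 2 <= k) (k_le_n : k <= n) (n_le : n - k <= 2 ^ k.-1).
Local Notation V := (hvert n).

Definition base_vertex (j : nat) : V :=
  [ffun c : 'I_n => (k <= c) && (j != 0) && bit j.-1 (c - k)].

Definition base_edge (j : 'I_n) : {set V} := [set base_vertex j; flip j (base_vertex j)].

Definition base_edges : {set {set V}} := [set base_edge (widen_ord k_le_n j) | j : 'I_k].

Section FixingAffine.
Variables (s : {perm 'I_n}) (a : V).
Hypothesis fix_edges : forall j : 'I_n, j < k -> haffp s a @: base_edge j = base_edge j.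

Lemma fix_low_perm (c : 'I_n) : c < k -> s c = c.
Proof. by move=> ck; have [] := haffp_fix_edge (fix_edges ck). Qed.

Lemma fix_base_vertex (j c : 'I_n) :
  j < k -> c != j -> base_vertex j (s c) (+) a c = base_vertex j c.
Proof. by move=> jk; have [_] := haffp_fix_edge (fix_edges jk); apply. Qed.

Lemma fix_low_shift (c : 'I_n) : c < k -> a c = false.
Proof.
move=> ck; have [j [jk cj]] : exists j : 'I_n, j < k /\ c != j.
  have [c0|c_gt0] := posnP c; [exists (Ordinal (leq_trans k_ge2 k_le_n))
                              | exists (Ordinal (leq_trans (ltnW k_ge2) k_le_n))];
    by split => /=; [lia | apply/eqP => /(congr1 val) /=; lia].
have := fix_base_vertex jk cj; rewrite fix_low_perm // !ffunE leqNgt ck /=.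
by case: (a c).
Qed.

Lemma fix_high_shift (c : 'I_n) : k <= c -> a c = false.
Proof.
move=> kc; pose j0 := Ordinal (leq_trans (ltnW k_ge2) k_le_n).
have cj0 : c != j0 by apply/eqP => /(congr1 val) /=; lia.
have := fix_base_vertex (ltnW k_ge2 : j0 < k) cj0; rewrite !ffunE !andbF.
by case: (a c).
Qed.

Lemma fix_high_perm (c : 'I_n) : k <= c -> s c = c.
Proof.
move=> kc; have ksc : k <= s c.
  rewrite leqNgt; apply/negP => sck.
  by have := fix_low_perm sck => /perm_inj Ec; move: kc; rewrite -Ec; lia.
apply: val_inj => /=; suff : s c - k = c - k by lia.
apply: (@bit_inj k.-1); [have := ltn_ord (s c); lia | have := ltn_ord c; lia |].
move=> i ik; have ij : i.+1 < n by lia.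
have cj : c != Ordinal ij by apply/eqP => /(congr1 val) /=; lia.
have := fix_base_vertex (ltac:(simpl; lia) : Ordinal ij < k) cj.
by rewrite !ffunE fix_high_shift // addbF /= ksc kc.
Qed.

Lemma fix_base_edges_id : haffp s a = 1%g.
Proof.
apply/permP => x; rewrite perm1 haffpE; apply/ffunP => c; rewrite ffunE.
have [ck|kc] := ltnP c k; first by rewrite fix_low_perm // fix_low_shift // addbF.
by rewrite fix_high_perm // fix_high_shift // addbF.
Qed.

End FixingAffine.

Lemma base_edges_determining : edge_determining base_edges.
Proof.
split; first by apply/subsetP => _ /imsetP [j _ ->]; exact: edge_in_hedges.
move=> phi /hauto_affine [s [a ->]] fixT; apply: fix_base_edges_id => j jk.
by apply: fixT; apply/imsetP; exists (Ordinal jk).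
Qed.

Lemma card_base_edges : #|base_edges| = k.
Proof.
rewrite card_imset ?card_ord // => i j /(congr1 (@dirs n)).
by rewrite /base_edge !dirs_edge => /set1_inj /(congr1 val) /= /val_inj.
Qed.

End UpperBound.

Section Threshold.
Variable n : nat.
Hypothesis n_ge3 : 3 <= n.
Local Notation L := (up_log 2 n).
Local Notation K := (if 2 ^ L.-1 < n - L then L.+1 else L).

Lemma up_log2_range : [/\ 2 ^ L.-1 < n, n <= 2 ^ L, 2 <= L,
  L.-1 <= 2 ^ L.-2 & 2 ^ L.-1 = 2 * 2 ^ L.-2].
Proof.
have lt_n : 2 ^ L.-1 < n by apply: up_log_gtn; lia.
have le_n : n <= 2 ^ L by apply: up_logP.
have L_ge2 : 2 <= L by case: L lt_n le_n => [|[|l]] //=; lia.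
split => //; first by have := ltn_expl L.-2 (isT : 1 < 2); lia.
by rewrite -expnS; congr (2 ^ _); lia.
Qed.

Lemma threshold_feasible : [/\ 2 <= K, K <= n & n - K <= 2 ^ K.-1].
Proof.
have [lt_n le_n L_ge2 L_le E2] := up_log2_range.
by case: ifP => /=; split; lia.
Qed.

Lemma threshold_minimal k : 2 <= k -> k < K -> 2 ^ k.-1 < n - k.
Proof.
have [lt_n _ L_ge2 L_le E2] := up_log2_range.
move=> k_ge2; have [kL _|kL] := ltnP k L.
  have : 2 ^ k.-1 <= 2 ^ L.-2 by rewrite leq_exp2l //; lia.
  lia.
by case: ifP => ? kK; [have -> : k = L by lia | lia].
Qed.

End Threshold.

Theorem theorem11 (n : nat) : 3 <= n ->
  det_index n (if 2 ^ (up_log 2 n).-1 < n - up_log 2 n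
               then (up_log 2 n).+1 else up_log 2 n).
Proof.
move=> n_ge3; have [K_ge2 K_le_n K_bound] := threshold_feasible n_ge3.
split.
  exists (base_edges K_le_n); split; last exact: card_base_edges.
  exact: base_edges_determining K_ge2 K_le_n K_bound.
have n_gt0 : 0 < n by lia.
move=> T /(edge_determining_lower n_gt0) [T_ge2 T_bound].
by rewrite leqNgt; apply/negP => /(threshold_minimal n_ge3 T_ge2); lia.
Qed.
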